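(* Let $0<\tau_1\le\dots\le\tau_n$, set $\tau_{n+1}=\infty$, and let $S\ge\frac14$. Define $$j_1^*=\inf\Big\{m\in[n]: S\Big(\sum_{i=1}^m\frac1{\tau_i}\Big)^{-1}<\tau_{m+1}\Big\},\qquad t_1=S\Big(\sum_{i=1}^{j_1^*}\frac1{\tau_i}\Big)^{-1},$$ $$t_2=\min_{j\in[n]}\Big[\Big(\sum_{i=1}^j\frac1{\tau_i}\Big)^{-1}(S+j)\Big].$$ Then $t_1\le t_2\le6t_1$.
   Context: $[n]=\{1,\dots,n\}$. The set defining $j_1^*$ is nonempty since $\tau_{n+1}=\infty$. *)

From mathcomp Require Import all_boot all_order all_algebra.
Set Implicit Arguments. Unset Strict Implicit. Unset Printing Implicit Defensive.
Import Order.TTheory GRing.Theory Num.Theory.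
Local Open Scope ring_scope.

(* tau : nat -> R, only tau 1, ..., tau n are used (1-based indices). *)
Definition Hsum (R : realFieldType) (tau : nat -> R) (m : nat) : R :=
  \sum_(1 <= i < m.+1) (tau i)^-1.

(* The predicate defining j_1^* : m in [n] and S (H m)^-1 < tau_{m+1},
   with the convention tau_{n+1} = +infinity (so m = n always qualifies). *)
Definition j1_pred (R : realFieldType) (n : nat) (tau : nat -> R) (S : R)
  (m : nat) : bool :=
  (1 <= m <= n)%N && ((m == n) || (S / Hsum tau m < tau m.+1)).

Lemma j1_pred_ex (R : realFieldType) (n : nat) (tau : nat -> R) (S : R) :
  (0 < n)%N -> exists m, j1_pred n tau S m.
Proof. by move=> hn; exists n; rewrite /j1_pred hn leqnn eqxx. Qed.

(* j_1^* = inf {...}; defined for n >= 1 (else 0, irrelevant). *)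
Definition j1star (R : realFieldType) (n : nat) (tau : nat -> R) (S : R) : nat :=
  match ltnP 0 n with
  | LtnNotGeq hn => ex_minn (j1_pred_ex tau S hn)
  | GeqNotLtn _ => 0%N
  end.

Definition t1 (R : realFieldType) (n : nat) (tau : nat -> R) (S : R) : R :=
  S / Hsum tau (j1star n tau S).

Definition t2 (R : realFieldType) (n : nat) (tau : nat -> R) (S : R) : R :=
  \big[Num.min/ (Hsum tau 1)^-1 * (S + 1)]_(1 <= j < n.+1)
     ((Hsum tau j)^-1 * (S + j%:R)).

From mathcomp Require Import all_boot all_order all_algebra.
From mathcomp Require Import lra.
Set Implicit Arguments. Unset Strict Implicit.
Import Order.TTheory GRing.Theory Num.Theory.
Local Open Scope ring_scope.

(* Write H_m for the partial sum sum_{i<=m} 1/tau_i and j for j_1^*.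
   Since tau is positive and nondecreasing, H is increasing and its
   increments are controlled: H_k - H_j <= (k - j)/tau_{j+1} for j < k,
   and H_m >= m/tau_{m+1}.
   Lower bound t1 <= t2: for every k in [n], S H_k <= (S + k) H_j.  For
   k <= j this is monotonicity of H; for k > j we have j < n, so j
   satisfies the stopping condition S < tau_{j+1} H_j, and the increment
   bound gives S (H_k - H_j) <= (k - j) H_j.
   Upper bound t2 <= 6 t1: minimality of j says that m = j - 1 fails the
   stopping condition, i.e. tau_j H_m <= S, whence j - 1 <= S.  So the
   term of index j in t2 is (S + j)/H_j <= (2S + 1)/H_j <= 6 S/H_j = 6 t1,
   the last step being exactly the hypothesis S >= 1/4. *)

Lemma Hsum_split (R : realFieldType) (tau : nat -> R) (a b : nat) :
  (a <= b)%N -> Hsum tau b = Hsum tau a + \sum_(a.+1 <= i < b.+1) (tau i)^-1.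
Proof. by move=> hab; rewrite /Hsum -big_cat_nat. Qed.

Lemma sum_inv_le (R : realFieldType) (tau : nat -> R) (c : R) (a b : nat) :
  0 < c -> (forall i, (a <= i < b)%N -> c <= tau i) ->
  \sum_(a <= i < b) (tau i)^-1 <= c^-1 * (b - a)%:R.
Proof.
move=> c0 hc; rewrite mulr_natr -sumr_const_nat; apply: ler_sum_nat => i hi.
by rewrite lef_pV2 ?posrE ?hc // (lt_le_trans c0 (hc i hi)).
Qed.

Lemma sum_inv_ge (R : realFieldType) (tau : nat -> R) (c : R) (a b : nat) :
  (forall i, (a <= i < b)%N -> 0 < tau i <= c) ->
  c^-1 * (b - a)%:R <= \sum_(a <= i < b) (tau i)^-1.
Proof.
move=> hc; rewrite mulr_natr -sumr_const_nat; apply: ler_sum_nat => i hi.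
have /andP[ti tic] := hc i hi.
by rewrite lef_pV2 ?posrE // (lt_le_trans ti tic).
Qed.

Section PartialSums.

Variables (R : realFieldType) (n : nat) (tau : nat -> R).
Hypothesis tau_pos : forall i, (1 <= i <= n)%N -> 0 < tau i.
Hypothesis tau_mono :
  forall i j, (1 <= i)%N -> (i <= j)%N -> (j <= n)%N -> tau i <= tau j.

Lemma Hsum_le (k m : nat) : (k <= m)%N -> (m <= n)%N -> Hsum tau k <= Hsum tau m.
Proof.
move=> km mn; rewrite (Hsum_split tau km) lerDl big_nat_cond.
apply: sumr_ge0 => i /andP[/andP[ki im] _]; rewrite ltW // invr_gt0 tau_pos //.
by rewrite (leq_trans _ ki) //= -ltnS (leq_trans im).
Qed.

(* H is positive on [1, n]: it already contains the term 1/tau_1. *)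
Lemma Hsum_gt0 (m : nat) : (1 <= m <= n)%N -> 0 < Hsum tau m.
Proof.
move=> /andP[m1 mn]; apply: lt_le_trans (Hsum_le m1 mn).
by rewrite /Hsum big_nat1 invr_gt0 tau_pos // (leq_trans m1 mn).
Qed.

Lemma Hsum_incr_le (j k : nat) : (j < k)%N -> (k <= n)%N ->
  Hsum tau k <= Hsum tau j + (tau j.+1)^-1 * (k%:R - j%:R).
Proof.
move=> jk kn; rewrite (Hsum_split tau (ltnW jk)) lerD2l -natrB ?(ltnW jk) //.
rewrite -subSS; apply: sum_inv_le => [|i /andP[ji ik]].
  by rewrite tau_pos //= (leq_trans jk kn).
by apply: tau_mono => //; rewrite -ltnS (leq_trans ik).
Qed.

Lemma Hsum_ge (m : nat) : (m < n)%N -> (tau m.+1)^-1 * m%:R <= Hsum tau m.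
Proof.
move=> mn; have := @sum_inv_ge _ tau (tau m.+1) 1 m.+1; rewrite subn1 /=.
apply=> i /andP[i1 im].
have i_n : (i <= n)%N by rewrite (leq_trans _ (ltnW mn)) // -ltnS.
by rewrite tau_pos ?i1 // tau_mono // ltnW.
Qed.

End PartialSums.

Lemma t2_le_term (R : realFieldType) (n : nat) (tau : nat -> R) (S : R) (k : nat) :
  (1 <= k <= n)%N -> t2 n tau S <= (Hsum tau k)^-1 * (S + k%:R).
Proof.
by move=> /andP[k1 kn]; apply: ge_bigmin_seq => //; rewrite mem_index_iota k1 ltnS.
Qed.

(* ... and dominates every common lower bound of them, since the seed of the
   minimum is the term of index 1. *)
Lemma t2_ge (R : realFieldType) (n : nat) (tau : nat -> R) (S c : R) :
  (1 <= n)%N -> (forall k, (1 <= k <= n)%N -> c <= (Hsum tau k)^-1 * (S + k%:R)) ->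
  c <= t2 n tau S.
Proof.
move=> n1 hc; rewrite /t2 big_nat_cond; apply: le_bigmin; first by apply: hc; rewrite n1.
by move=> k /andP[/andP[k1 kn] _]; apply: hc; rewrite k1 -ltnS.
Qed.

Section StoppingIndex.

Variables (R : realFieldType) (n : nat) (tau : nat -> R) (S : R).
Hypothesis n_gt0 : (1 <= n)%N.
Hypothesis tau_pos : forall i, (1 <= i <= n)%N -> 0 < tau i.
Hypothesis tau_mono :
  forall i j, (1 <= i)%N -> (i <= j)%N -> (j <= n)%N -> tau i <= tau j.
Hypothesis S_ge0 : 0 <= S.

Local Notation j := (j1star n tau S).

Lemma j1star_spec :
  j1_pred n tau S j /\ forall m, j1_pred n tau S m -> (j <= m)%N.
Proof.
rewrite /j1star; case: ltnP => [n_pos | n_le0]; last by have := leq_trans n_gt0 n_le0.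
by case: ex_minnP.
Qed.

Lemma j1star_range : (1 <= j <= n)%N.
Proof. by have [/andP[]] := j1star_spec. Qed.

Lemma Hsum_j1star_gt0 : 0 < Hsum tau j.
Proof. by apply: (Hsum_gt0 tau_pos); exact: j1star_range. Qed.

Lemma j1star_stop : (j < n)%N -> S < tau j.+1 * Hsum tau j.
Proof.
have [/andP[_ /orP[/eqP-> | stop] _]] := j1star_spec; first by rewrite ltnn.
by move=> _; rewrite -ltr_pdivrMr // Hsum_j1star_gt0.
Qed.

Lemma j1star_prev : (1 < j)%N -> tau j * Hsum tau j.-1 <= S.
Proof.
move=> j_gt1; have [_ jmin] := j1star_spec.
have [_ jn] := andP j1star_range.
have jm1 : (1 <= j.-1)%N by rewrite -ltnS prednK // ltnW.
have jm_lt_n : (j.-1 < n)%N by rewrite prednK // ltnW.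
have : ~~ j1_pred n tau S j.-1.
  by apply/negP => /jmin; rewrite leqNgt ltn_predL (ltnW j_gt1).
rewrite /j1_pred jm1 (ltnW jm_lt_n) (ltn_eqF jm_lt_n) /= -leNgt prednK ?(ltnW j_gt1) //.
by rewrite ler_pdivlMr // (Hsum_gt0 tau_pos) // jm1 ltnW.
Qed.

Lemma j1star_le : j%:R <= S + 1.
Proof.
case: (leqP j 1) => [j_le1 | j_gt1].
  by apply: (le_trans (y := 1)); [rewrite lern1 | rewrite lerDr].
have [_ jn] := andP j1star_range.
have tj : 0 < tau j by apply: tau_pos; rewrite ltnW.
have jm_lt_n : (j.-1 < n)%N by rewrite prednK // ltnW.
have jm_le : j.-1%:R <= tau j * Hsum tau j.-1.
  have := Hsum_ge tau_pos tau_mono jm_lt_n; rewrite prednK ?(ltnW j_gt1) //.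
  by rewrite -(ler_pM2l tj) mulrA mulfV ?mul1r // lt0r_neq0.
have j_succ : j%:R = j.-1%:R + 1 :> R by rewrite natr1 (ltn_predK j_gt1).
have := j1star_prev j_gt1; lra.
Qed.

Lemma cross_bound (k : nat) : (1 <= k <= n)%N ->
  S * Hsum tau k <= (S + k%:R) * Hsum tau j.
Proof.
move=> /andP[k1 kn]; have Hj := Hsum_j1star_gt0; have S0 := S_ge0.
have k0 : (0 : R) <= k%:R by rewrite ler0n.
case: (leqP k j) => [kj | jk].
  have [_ jn] := andP j1star_range.
  have Hkj := Hsum_le tau_pos kj jn; nra.
have jn : (j < n)%N := leq_trans jk kn.
have a0 : 0 < tau j.+1 by rewrite tau_pos.
have stopV : S * (tau j.+1)^-1 <= Hsum tau j.
  by rewrite ler_pdivrMr // mulrC ltW // j1star_stop.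
have incr := ler_wpM2l S_ge0 (Hsum_incr_le tau_pos tau_mono jk kn).
have kj_ge0 : (0 : R) <= k%:R - j%:R by rewrite subr_ge0 ler_nat ltnW.
have tail := ler_wpM2r kj_ge0 stopV.
have j0 : (0 : R) <= j%:R by rewrite ler0n.
nra.
Qed.

Lemma t1_le_t2 : t1 n tau S <= t2 n tau S.
Proof.
apply: (t2_ge n_gt0) => k hk.
have Hk : 0 < Hsum tau k by apply: (Hsum_gt0 tau_pos).
rewrite /t1 ler_pdivrMr ?Hsum_j1star_gt0 // -mulrA ler_pdivlMl // mulrC.
exact: cross_bound.
Qed.

Lemma t2_le_6t1 : 1 / 4 <= S -> t2 n tau S <= 6 * t1 n tau S.
Proof.
move=> S_ge_quarter; apply: le_trans (t2_le_term _ _ j1star_range) _.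
rewrite /t1 mulrA mulrC ler_pM2r ?invr_gt0 ?Hsum_j1star_gt0 //.
have := j1star_le; lra.
Qed.

End StoppingIndex.

Theorem mainTheorem14 (R : realFieldType) (n : nat) (tau : nat -> R) (S : R) :
  (1 <= n)%N ->
  (forall i, (1 <= i <= n)%N -> 0 < tau i) ->
  (forall i j, (1 <= i)%N -> (i <= j)%N -> (j <= n)%N -> tau i <= tau j) ->
  1 / 4 <= S ->
  t1 n tau S <= t2 n tau S /\ t2 n tau S <= 6 * t1 n tau S.
Proof.
move=> n_gt0 tau_pos tau_mono S_ge_quarter.
have S_ge0 : 0 <= S by apply: le_trans S_ge_quarter; rewrite divr_ge0.
split; first exact: t1_le_t2.
exact: t2_le_6t1.
Qed.
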